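(* Let $q,r$ be integers with $1\le q\le r$ and set $N=2^{r-q}$. Define the $1$-periodic function $f_r(\varphi)=2^{-r}\frac{\sin^2(\pi 2^r\varphi)}{\sin^2(\pi\varphi)}$ (extended continuously by $f_r(\varphi)=2^r$ at integer $\varphi$), and $$F_{r,q}(\varphi)=2^{q-r}\sum_{k=0}^{N} f_r\!\left(\varphi-k\,2^{-r}\right),\qquad G_q(\varphi)=\begin{cases}2^q,& 0\le\varphi<2^{-q},\\ 0,& 2^{-q}\le \varphi\le 1.\end{cases}$$ Then $$\int_0^1\left|F_{r,q}(\varphi)-G_q(\varphi)\right|\,d\varphi\le 2^{q-r+2}\left(1+\frac{\ln(2^{r-q})}{\pi^2}\right).$$
   Context: $f_r(\varphi)=2^r|\alpha_0(\varphi)|^2$, where $\alpha_s(\varphi)=\frac{1}{2^r}\frac{1-\exp(2\pi i(2^r\varphi-s))}{1-\exp(2\pi i(\varphi-s/2^r))}$ is the amplitude for outcome $s$ of quantum phase estimation with $r$ ancilla qubits on an eigenphase $\varphi$; $F_{r,q}$ describes the (rescaled) weight with which eigenphases are kept when the first $q$ of the $r$ ancilla qubits are measured, and $G_q$ is the corresponding ideal rectangular window. *)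

From Stdlib Require Import Reals Lra Lia.
Open Scope R_scope.

Definition f_r (r : nat) (phi : R) : R :=
  if Req_EM_T (sin (PI * phi)) 0 then 2 ^ r
  else / 2 ^ r * (sin (PI * 2 ^ r * phi)) ^ 2 / (sin (PI * phi)) ^ 2.

(* F_{r,q}(phi) = 2^{q-r} sum_{k=0}^{N} f_r(phi - k 2^{-r}),  N = 2^{r-q}.
   sum_f_R0 g n = g 0 + ... + g n (n+1 terms). *)
Definition F_rq (r q : nat) (phi : R) : R :=
  2 ^ q / 2 ^ r *
  sum_f_R0 (fun k => f_r r (phi - INR k / 2 ^ r)) (2 ^ (r - q))%nat.

Definition G_q (q : nat) (phi : R) : R :=
  if Rle_dec 0 phi then (if Rlt_dec phi (/ 2 ^ q) then 2 ^ q else 0) else 0.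

From Stdlib Require Import Reals Lra Lia.
From Coquelicot Require Import Coquelicot.
Open Scope R_scope.

(* f_r is the Fejer kernel of order M = 2^r: f_r(t) = (1/M) sum_{m<M} D_m(pi t) with
   D_m(x) = 1 + 2 sum_{j=1}^m cos(2 j x).  Over M equispaced nodes the cosines average to 0,
   so the M translates of f_r by multiples of 1/M add up to M; hence 0 <= F_{r,q} <= 2^q and
   |F - G| is 2^q - F on [0, 2^-q) and F on [2^-q, 1].  F has an explicit primitive built
   from the primitive Phi of f_r, which is odd with Phi(1 - t) = 1 - Phi(t), so the integral
   equals 2 + c - 4 c sum_{k=0}^N Phi(k/M) with c = 2^(q-r).  Since 1/(M sin^2(pi t))
   dominates f_r, 1/2 - Phi(a) <= 1/(M pi^2 a) on (0, 1/2], and summing over the nodes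
   leaves a harmonic sum, at most 1 + ln N. *)

Lemma sum_f_R0_telescope (u : nat -> R) n :
  sum_f_R0 (fun k => u k - u (S k)) n = u O - u (S n).
Proof. induction n as [|n IH]; simpl; [ring|]. rewrite IH. ring. Qed.

Lemma sum_f_R0_rev (u : nat -> R) n : sum_f_R0 (fun k => u (n - k)%nat) n = sum_f_R0 u n.
Proof.
  revert u. induction n as [|n IH]; intro u; [reflexivity|].
  rewrite decomp_sum by lia. simpl pred. rewrite Nat.sub_0_r, tech5.
  rewrite (sum_eq _ (fun k => u (n - k)%nat)), IH by reflexivity. ring.
Qed.

Lemma sum_f_R0_le_of_nonneg (u : nat -> R) m n : (forall k, 0 <= u k) -> (m <= n)%nat ->
  sum_f_R0 u m <= sum_f_R0 u n.
Proof.
  intros hu hmn. induction hmn as [|n hmn IH]; [lra|].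
  rewrite tech5. specialize (hu (S n)). lra.
Qed.

Lemma INR_pow2 n : INR (2 ^ n) = 2 ^ n.
Proof. rewrite pow_INR. reflexivity. Qed.

Lemma pow2_nat_pos n : (0 < 2 ^ n)%nat.
Proof. apply Nat.neq_0_lt_0, Nat.pow_nonzero. lia. Qed.

Lemma pow2_sub_split q r : (q <= r)%nat -> 2 ^ r = 2 ^ q * 2 ^ (r - q).
Proof. intro hqr. rewrite <- pow_add. f_equal. lia. Qed.

Lemma is_derive_sum_f_R0 (f df : nat -> R -> R) n x :
  (forall k, is_derive (f k) x (df k x)) ->
  is_derive (fun y => sum_f_R0 (fun k => f k y) n) x (sum_f_R0 (fun k => df k x) n).
Proof.
  intro hd. induction n as [|n IH]; [apply hd|].
  apply (is_derive_plus (fun y => sum_f_R0 (fun k => f k y) n) (f (S n))); [exact IH|apply hd].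
Qed.

Lemma continuous_sum_f_R0 (f : nat -> R -> R) n x :
  (forall k, continuous (f k) x) -> continuous (fun y => sum_f_R0 (fun k => f k y) n) x.
Proof.
  intro hc. induction n as [|n IH]; [apply hc|].
  apply (continuous_plus (fun y => sum_f_R0 (fun k => f k y) n) (f (S n))); [exact IH|apply hc].
Qed.

Lemma le_of_is_derive_nonneg (h dh : R -> R) a b : a <= b ->
  (forall x, a <= x <= b -> is_derive h x (dh x)) ->
  (forall x, a <= x <= b -> 0 <= dh x) -> h a <= h b.
Proof.
  intros hab hd hpos. destruct (Req_dec a b) as [<-|hne]; [lra|].
  destruct (MVT_cor2 h dh a b) as [c [hc hac]];
    [lra | intros x hx; apply is_derive_Reals, hd, hx |].
  pose proof (hpos c ltac:(lra)). nra.
Qed.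

Lemma is_RInt_derive_R (h H : R -> R) a b : a <= b ->
  (forall x, a <= x <= b -> is_derive H x (h x)) -> (forall x, a <= x <= b -> continuous h x) ->
  is_RInt h a b (H b - H a).
Proof.
  intros hab hd hc. apply (is_RInt_derive H h);
    intros x hx; rewrite Rmin_left, Rmax_right in hx by exact hab; auto.
Qed.

Lemma x_mul_cos_le_sin x : 0 <= x <= PI -> x * cos x <= sin x.
Proof.
  intro hx.
  enough (h : sin 0 - 0 * cos 0 <= sin x - x * cos x) by (rewrite sin_0 in h; lra).
  apply (le_of_is_derive_nonneg (fun y => sin y - y * cos y) (fun y => y * sin y)); [lra| |].
  - intros y _. auto_derive; [easy|ring].
  - intros y hy. apply Rmult_le_pos; [lra|apply sin_ge_0; lra].
Qed.

Lemma sin_PI_mul_pos x : 0 < x <= 1 / 2 -> 0 < sin (PI * x).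
Proof.
  intro hx. pose proof PI_RGT_0. apply sin_gt_0; nra.
Qed.

Lemma inv_PI2_lt : / PI ^ 2 < 1 / 9.
Proof.
  pose proof PI2_3_2. unfold Rdiv. rewrite Rmult_1_l. apply Rinv_lt_contravar; [|nra].
  apply Rmult_lt_0_compat; [lra|apply pow_lt; lra].
Qed.

Lemma inv_succ_le_ln_diff x : 0 < x -> / (x + 1) <= ln (x + 1) - ln x.
Proof.
  intro hx. pose proof (exp_ineq1_le (ln x - ln (x + 1))) as h.
  unfold Rminus in h. rewrite exp_plus, exp_Ropp, !exp_ln in h by lra.
  replace (x * / (x + 1)) with (1 - / (x + 1)) in h by (field; lra). lra.
Qed.

Lemma harmonic_le_1_add_ln n : sum_f_R0 (fun k => / INR (S k)) n <= 1 + ln (INR (S n)).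
Proof.
  induction n as [|n IH].
  - simpl. rewrite Rinv_1, ln_1. lra.
  - rewrite tech5.
    pose proof (inv_succ_le_ln_diff (INR (S n)) (lt_0_INR _ (Nat.lt_0_succ n))) as h.
    rewrite <- S_INR in h. lra.
Qed.

Fixpoint dirichlet (m : nat) (x : R) : R :=
  match m with O => 1 | S m' => dirichlet m' x + 2 * cos (2 * INR (S m') * x) end.

Fixpoint fejer_sum (n : nat) (x : R) : R :=
  match n with O => 0 | S n' => fejer_sum n' x + dirichlet n' x end.

Lemma sin_mul_dirichlet m x : sin x * dirichlet m x = sin ((2 * INR m + 1) * x).
Proof.
  induction m as [|m IH]; cbn [dirichlet].
  - simpl. rewrite Rmult_1_r. f_equal. ring.
  - set (A := (2 * INR m + 1) * x).
    replace (2 * INR (S m) * x) with (A + x) by (unfold A; rewrite S_INR; ring).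
    replace ((2 * INR (S m) + 1) * x) with (A + x + x) by (unfold A; rewrite S_INR; ring).
    rewrite Rmult_plus_distr_l, IH; fold A. rewrite !sin_plus, !cos_plus.
    pose proof (sin2_cos2 x) as hx. unfold Rsqr in hx.
    pose proof (f_equal (Rmult (sin A)) hx). nra.
Qed.

Lemma sin2_mul_fejer_sum n x : sin x ^ 2 * fejer_sum n x = sin (INR n * x) ^ 2.
Proof.
  induction n as [|n IH]; cbn [fejer_sum].
  - simpl. rewrite Rmult_0_l, sin_0. ring.
  - replace (sin x ^ 2 * (fejer_sum n x + dirichlet n x))
      with (sin x ^ 2 * fejer_sum n x + sin x * (sin x * dirichlet n x)) by ring.
    rewrite IH, sin_mul_dirichlet.
    set (B := INR n * x).
    replace (INR (S n) * x) with (B + x) by (unfold B; rewrite S_INR; ring).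
    replace ((2 * INR n + 1) * x) with (B + (B + x)) by (unfold B; ring).
    rewrite !sin_plus, !cos_plus.
    pose proof (sin2_cos2 x) as hx. pose proof (sin2_cos2 B) as hB. unfold Rsqr in hx, hB.
    pose proof (f_equal (Rmult (sin B * sin B)) hx).
    pose proof (f_equal (Rmult (sin x * sin x)) hB).
    nra.
Qed.

Lemma sin_nat_mul_eq0 k x : sin x = 0 -> sin (INR k * x) = 0.
Proof.
  intro hx. induction k as [|k IH].
  - simpl. rewrite Rmult_0_l. apply sin_0.
  - rewrite S_INR, Rmult_plus_distr_r, Rmult_1_l, sin_plus, IH, hx. ring.
Qed.

Lemma dirichlet_sin_eq0 m x : sin x = 0 -> dirichlet m x = 2 * INR m + 1.
Proof.
  intro hx. induction m as [|m IH]; cbn [dirichlet].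
  - simpl; ring.
  - rewrite IH. replace (2 * INR (S m) * x) with (2 * (INR (S m) * x)) by ring.
    rewrite cos_2a_sin, (sin_nat_mul_eq0 (S m) x hx), S_INR. ring.
Qed.

Lemma fejer_sum_sin_eq0 n x : sin x = 0 -> fejer_sum n x = INR n ^ 2.
Proof.
  intro hx. induction n as [|n IH]; cbn [fejer_sum].
  - simpl; ring.
  - rewrite IH, dirichlet_sin_eq0 by exact hx. rewrite S_INR. ring.
Qed.

Lemma fejer_sum_nonneg n x : 0 <= fejer_sum n x.
Proof.
  destruct (Req_dec (sin x) 0) as [hx|hx].
  - rewrite fejer_sum_sin_eq0 by exact hx. apply pow2_ge_0.
  - assert (hs : 0 < sin x ^ 2) by (apply pow2_gt_0; exact hx).
    apply Rmult_le_reg_l with (sin x ^ 2); [exact hs|].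
    rewrite sin2_mul_fejer_sum, Rmult_0_r. apply pow2_ge_0.
Qed.

Lemma fejer_sum_le_inv_sin2 n x : sin x <> 0 -> fejer_sum n x <= / sin x ^ 2.
Proof.
  intro hx. assert (hs : 0 < sin x ^ 2) by (apply pow2_gt_0; exact hx).
  apply Rmult_le_reg_l with (sin x ^ 2); [exact hs|].
  rewrite sin2_mul_fejer_sum, Rinv_r by lra.
  pose proof (SIN_bound (INR n * x)). nra.
Qed.

Lemma sum_cos_equispaced n d x : (1 <= d <= n)%nat ->
  sum_f_R0 (fun k => cos (2 * INR d * (x - PI * INR k / INR (S n)))) n = 0.
Proof.
  intro hd. pose proof PI_RGT_0.
  assert (hn : 0 < INR (S n)) by (apply lt_0_INR; lia).
  assert (hdpos : 0 < INR d) by (apply lt_0_INR; lia).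
  assert (hdn : INR d < INR (S n)) by (apply lt_INR; lia).
  set (h := PI * INR d / INR (S n)).
  assert (hs : 0 < sin h).
  { apply sin_gt_0; unfold h.
    - apply Rdiv_lt_0_compat; [apply Rmult_lt_0_compat|]; lra.
    - apply Rmult_lt_reg_r with (INR (S n)); [exact hn|].
      unfold Rdiv. rewrite Rmult_assoc, Rinv_l, Rmult_1_r by lra.
      apply Rmult_lt_compat_l; lra. }
  (* 2 sin h cos y = sin (y + h) - sin (y - h), and consecutive nodes are 2h apart *)
  set (u := fun k => sin (2 * INR d * x - INR k * (2 * h) + h)).
  rewrite (sum_eq _ (fun k => (u k - u (S k)) * / (2 * sin h))).
  - rewrite <- scal_sum, sum_f_R0_telescope. unfold u.
    replace (2 * INR d * x - INR 0 * (2 * h) + h)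
      with (2 * INR d * x - INR (S n) * (2 * h) + h + 2 * INR d * PI)
      by (unfold h; change (INR 0) with 0; field; lra).
    rewrite sin_period. ring.
  - intros k _. unfold u. rewrite (S_INR k).
    set (A := 2 * INR d * x - INR k * (2 * h)).
    replace (2 * INR d * (x - PI * INR k / INR (S n))) with A by (unfold A, h; field; lra).
    replace (2 * INR d * x - (INR k + 1) * (2 * h) + h) with (A - h) by (unfold A; ring).
    unfold Rminus. rewrite !sin_plus, sin_neg, cos_neg. field. lra.
Qed.

Lemma sum_dirichlet_equispaced n m x : (m <= n)%nat ->
  sum_f_R0 (fun k => dirichlet m (x - PI * INR k / INR (S n))) n = INR (S n).
Proof.
  intro hm. induction m as [|m IH]; cbn [dirichlet].
  - rewrite sum_cte. ring.
  - rewrite plus_sum, IH by lia.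
    rewrite (sum_eq _ (fun k => cos (2 * INR (S m) * (x - PI * INR k / INR (S n))) * 2))
      by (intros; ring).
    rewrite <- scal_sum, sum_cos_equispaced by lia. ring.
Qed.

Lemma sum_fejer_sum_equispaced n p x : (p <= S n)%nat ->
  sum_f_R0 (fun k => fejer_sum p (x - PI * INR k / INR (S n))) n = INR p * INR (S n).
Proof.
  intro hp. induction p as [|p IH]; cbn [fejer_sum].
  - rewrite sum_cte. simpl. ring.
  - rewrite plus_sum, IH, sum_dirichlet_equispaced by lia. rewrite (S_INR p). ring.
Qed.

Fixpoint dirichlet_prim (m : nat) (t : R) : R :=
  match m with
  | O => t
  | S m' => dirichlet_prim m' t + sin (2 * INR (S m') * (PI * t)) / (PI * INR (S m'))
  end.

Fixpoint fejer_sum_prim (n : nat) (t : R) : R :=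
  match n with O => 0 | S n' => fejer_sum_prim n' t + dirichlet_prim n' t end.

Lemma is_derive_dirichlet_prim m t : is_derive (dirichlet_prim m) t (dirichlet m (PI * t)).
Proof.
  induction m as [|m IH]; cbn [dirichlet_prim dirichlet].
  - auto_derive; [easy|ring].
  - apply (is_derive_plus (dirichlet_prim m)
      (fun t => sin (2 * INR (S m) * (PI * t)) / (PI * INR (S m)))); [exact IH|].
    assert (hk : INR (S m) <> 0) by (apply not_0_INR; lia).
    set (k := INR (S m)) in *.
    auto_derive; [easy|]. field. split; [exact hk|apply PI_neq0].
Qed.

Lemma is_derive_fejer_sum_prim n t : is_derive (fejer_sum_prim n) t (fejer_sum n (PI * t)).
Proof.
  induction n as [|n IH]; cbn [fejer_sum_prim fejer_sum].
  - auto_derive; easy.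
  - apply (is_derive_plus (fejer_sum_prim n) (dirichlet_prim n)); [exact IH|].
    apply is_derive_dirichlet_prim.
Qed.

Lemma ex_derive_dirichlet m x : ex_derive (dirichlet m) x.
Proof.
  induction m as [|m IH]; cbn [dirichlet].
  - apply ex_derive_const.
  - apply (ex_derive_plus (dirichlet m) (fun x => 2 * cos (2 * INR (S m) * x))); [exact IH|].
    auto_derive. easy.
Qed.

Lemma ex_derive_fejer_sum n x : ex_derive (fejer_sum n) x.
Proof.
  induction n as [|n IH]; cbn [fejer_sum].
  - apply ex_derive_const.
  - apply (ex_derive_plus (fejer_sum n) (dirichlet n)); [exact IH|].
    apply ex_derive_dirichlet.
Qed.

Lemma dirichlet_prim_opp m t : dirichlet_prim m (- t) = - dirichlet_prim m t.
Proof.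
  induction m as [|m IH]; cbn [dirichlet_prim]; [ring|].
  rewrite IH.
  replace (2 * INR (S m) * (PI * - t)) with (- (2 * INR (S m) * (PI * t))) by ring.
  rewrite sin_neg. unfold Rdiv. ring.
Qed.

Lemma dirichlet_prim_1_sub m t : dirichlet_prim m (1 - t) = 1 - dirichlet_prim m t.
Proof.
  induction m as [|m IH]; cbn [dirichlet_prim]; [ring|].
  rewrite IH.
  replace (2 * INR (S m) * (PI * (1 - t)))
    with (- (2 * INR (S m) * (PI * t)) + 2 * INR (S m) * PI) by ring.
  rewrite sin_period, sin_neg. unfold Rdiv. ring.
Qed.

Lemma fejer_sum_prim_opp n t : fejer_sum_prim n (- t) = - fejer_sum_prim n t.
Proof.
  induction n as [|n IH]; cbn [fejer_sum_prim]; [ring|].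
  rewrite IH, dirichlet_prim_opp. ring.
Qed.

Lemma fejer_sum_prim_1_sub n t : fejer_sum_prim n (1 - t) = INR n - fejer_sum_prim n t.
Proof.
  induction n as [|n IH]; cbn [fejer_sum_prim]; [simpl; ring|].
  rewrite IH, dirichlet_prim_1_sub, S_INR. ring.
Qed.

Definition fejer_kernel (n : nat) (t : R) : R := fejer_sum n (PI * t) / INR n.

Definition fejer_kernel_prim (n : nat) (t : R) : R := fejer_sum_prim n t / INR n.

Lemma f_r_fejer_kernel r t : f_r r t = fejer_kernel (2 ^ r) t.
Proof.
  unfold f_r, fejer_kernel. rewrite INR_pow2.
  pose proof (pow_lt 2 r ltac:(lra)) as hM.
  destruct (Req_EM_T (sin (PI * t)) 0) as [h|h].
  - rewrite fejer_sum_sin_eq0, INR_pow2 by exact h. field. lra.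
  - pose proof (sin2_mul_fejer_sum (2 ^ r) (PI * t)) as hs. rewrite INR_pow2 in hs.
    replace (PI * 2 ^ r * t) with (2 ^ r * (PI * t)) by ring.
    rewrite <- hs. field. split; [lra|exact h].
Qed.

Lemma fejer_kernel_nonneg n t : (0 < n)%nat -> 0 <= fejer_kernel n t.
Proof.
  intro hn. apply Rle_mult_inv_pos; [apply fejer_sum_nonneg|apply lt_0_INR, hn].
Qed.

Lemma fejer_kernel_le_inv_sin2 n t : (0 < n)%nat -> sin (PI * t) <> 0 ->
  fejer_kernel n t <= / (INR n * sin (PI * t) ^ 2).
Proof.
  intros hn ht. unfold fejer_kernel, Rdiv. rewrite Rinv_mult, Rmult_comm.
  apply Rmult_le_compat_l; [apply Rlt_le, Rinv_0_lt_compat, lt_0_INR, hn|].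
  apply fejer_sum_le_inv_sin2, ht.
Qed.

Lemma sum_fejer_kernel_equispaced n x :
  sum_f_R0 (fun k => fejer_kernel (S n) (x - INR k / INR (S n))) n = INR (S n).
Proof.
  assert (hn : 0 < INR (S n)) by (apply lt_0_INR; lia).
  unfold fejer_kernel.
  rewrite (sum_eq _ (fun k => fejer_sum (S n) (PI * x - PI * INR k / INR (S n)) * / INR (S n)))
    by (intros; unfold Rdiv; f_equal; f_equal; ring).
  rewrite <- scal_sum, sum_fejer_sum_equispaced by lia. field. lra.
Qed.

Lemma sum_fejer_kernel_equispaced_le (M N : nat) x : (N < M)%nat ->
  sum_f_R0 (fun k => fejer_kernel M (x - INR k / INR M)) N <= INR M.
Proof.
  intro hNM. destruct M as [|n]; [lia|].
  eapply Rle_trans; [|right; apply (sum_fejer_kernel_equispaced n x)].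
  apply sum_f_R0_le_of_nonneg; [|lia].
  intro k. apply fejer_kernel_nonneg. lia.
Qed.

Lemma is_derive_fejer_kernel_prim n t :
  is_derive (fejer_kernel_prim n) t (fejer_kernel n t).
Proof.
  unfold fejer_kernel_prim, fejer_kernel.
  pose proof (is_derive_fejer_sum_prim n t) as hd.
  set (c := INR n). auto_derive.
  - exists (fejer_sum n (PI * t)). exact hd.
  - erewrite is_derive_unique by exact hd. unfold Rdiv. ring.
Qed.

Lemma is_derive_fejer_kernel_prim_shift n c x :
  is_derive (fun y => fejer_kernel_prim n (y - c)) x (fejer_kernel n (x - c)).
Proof.
  rewrite <- (scal_one (fejer_kernel n (x - c))).
  apply (is_derive_comp (fejer_kernel_prim n) (fun y => y - c)).
  - apply is_derive_fejer_kernel_prim.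
  - auto_derive; easy.
Qed.

Lemma continuous_fejer_kernel n t : continuous (fejer_kernel n) t.
Proof.
  apply (ex_derive_continuous (fejer_kernel n)). unfold fejer_kernel.
  set (c := INR n). auto_derive. apply ex_derive_fejer_sum.
Qed.

Lemma fejer_kernel_prim_opp n t : fejer_kernel_prim n (- t) = - fejer_kernel_prim n t.
Proof. unfold fejer_kernel_prim. rewrite fejer_sum_prim_opp. unfold Rdiv. ring. Qed.

Lemma fejer_kernel_prim_0 n : fejer_kernel_prim n 0 = 0.
Proof.
  pose proof (fejer_sum_prim_opp n 0) as h. rewrite Ropp_0 in h.
  unfold fejer_kernel_prim. replace (fejer_sum_prim n 0) with 0 by lra. unfold Rdiv. ring.
Qed.

Lemma fejer_kernel_prim_1_sub n t : (0 < n)%nat ->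
  fejer_kernel_prim n (1 - t) = 1 - fejer_kernel_prim n t.
Proof.
  intro hn. pose proof (lt_0_INR _ hn).
  unfold fejer_kernel_prim. rewrite fejer_sum_prim_1_sub. field. lra.
Qed.

Lemma fejer_kernel_prim_half n : (0 < n)%nat -> fejer_kernel_prim n (1 / 2) = 1 / 2.
Proof.
  intro hn. pose proof (fejer_kernel_prim_1_sub n (1 / 2) hn) as h.
  replace (1 - 1 / 2) with (1 / 2) in h by field. lra.
Qed.

Lemma cot_div_le_inv c a : 0 < c -> 0 < a <= 1 / 2 ->
  cos (PI * a) / (c * PI * sin (PI * a)) <= / (c * PI ^ 2 * a).
Proof.
  intros hc ha. pose proof PI_RGT_0 as hPI.
  assert (hs : 0 < sin (PI * a)) by (apply sin_PI_mul_pos, ha).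
  assert (hK : 0 < c * PI ^ 2 * a).
  { apply Rmult_lt_0_compat; [apply Rmult_lt_0_compat; [exact hc|apply pow_lt, hPI]|lra]. }
  replace (cos (PI * a) / (c * PI * sin (PI * a)))
    with (PI * a * cos (PI * a) * / (c * PI ^ 2 * a * sin (PI * a))) by (field; lra).
  replace (/ (c * PI ^ 2 * a)) with (sin (PI * a) * / (c * PI ^ 2 * a * sin (PI * a)))
    by (field; lra).
  apply Rmult_le_compat_r.
  - apply Rlt_le, Rinv_0_lt_compat, Rmult_lt_0_compat; [exact hK|exact hs].
  - apply x_mul_cos_le_sin. nra.
Qed.

Lemma is_derive_cot_div c x : 0 < c -> 0 < sin (PI * x) ->
  is_derive (fun x => - (cos (PI * x) / (c * PI * sin (PI * x)))) x
            (/ (c * sin (PI * x) ^ 2)).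
Proof.
  intros hc hsx. pose proof PI_RGT_0.
  assert (hd : 0 < c * PI * sin (PI * x)) by (apply Rmult_lt_0_compat; [nra|exact hsx]).
  auto_derive; [lra|].
  transitivity (/ (c * sin (PI * x) ^ 2)
                * (sin (PI * x) * sin (PI * x) + cos (PI * x) * cos (PI * x))).
  - field. lra.
  - pose proof (sin2_cos2 (PI * x)) as hp. unfold Rsqr in hp. rewrite hp. ring.
Qed.

(* Compare the kernel with 1/(n sin^2(pi x)), whose primitive is -cot(pi x)/(n pi). *)
Lemma fejer_kernel_prim_tail n a : (0 < n)%nat -> 0 < a <= 1 / 2 ->
  1 / 2 - fejer_kernel_prim n a <= / (INR n * PI ^ 2 * a).
Proof.
  intros hn ha. assert (hc : 0 < INR n) by (apply lt_0_INR, hn).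
  pose proof (cot_div_le_inv (INR n) a hc ha) as hcot.
  enough (- (cos (PI * a) / (INR n * PI * sin (PI * a))) - fejer_kernel_prim n a
          <= - (cos (PI * (1 / 2)) / (INR n * PI * sin (PI * (1 / 2))))
             - fejer_kernel_prim n (1 / 2)) as hmono.
  { replace (PI * (1 / 2)) with (PI / 2) in hmono by field.
    rewrite cos_PI2, fejer_kernel_prim_half in hmono by exact hn.
    unfold Rdiv at 3 in hmono. lra. }
  apply (le_of_is_derive_nonneg
     (fun x => - (cos (PI * x) / (INR n * PI * sin (PI * x))) - fejer_kernel_prim n x)
     (fun x => / (INR n * sin (PI * x) ^ 2) - fejer_kernel n x)); [lra| |];
    intros x hx; assert (hsx : 0 < sin (PI * x)) by (apply sin_PI_mul_pos; lra).
  - apply (is_derive_minus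
      (fun x => - (cos (PI * x) / (INR n * PI * sin (PI * x)))) (fejer_kernel_prim n)).
    + apply is_derive_cot_div; assumption.
    + apply is_derive_fejer_kernel_prim.
  - pose proof (fejer_kernel_le_inv_sin2 n x hn ltac:(lra)). lra.
Qed.

Definition fejer_prim_node_sum (M N : nat) : R :=
  sum_f_R0 (fun k => fejer_kernel_prim M (INR k / INR M)) N.

Lemma fejer_prim_node_sum_ge (M N : nat) : (1 <= N)%nat -> (2 * N <= M)%nat ->
  INR N / 2 - (1 + ln (INR N)) / PI ^ 2 <= fejer_prim_node_sum M N.
Proof.
  intros hN hNM. unfold fejer_prim_node_sum. pose proof PI_RGT_0 as hPI.
  assert (hP2 : 0 < PI ^ 2) by (apply pow_lt, hPI).
  assert (hM : 0 < INR M) by (apply lt_0_INR; lia).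
  destruct N as [|N]; [lia|].
  rewrite decomp_sum by lia. simpl pred.
  change (INR 0) with 0. rewrite Rdiv_0_l, fejer_kernel_prim_0, Rplus_0_l.
  assert (hterm : forall k, (k <= N)%nat ->
            1 / 2 - / INR (S k) / PI ^ 2 <= fejer_kernel_prim M (INR (S k) / INR M)).
  { intros k hk.
    assert (hk0 : 0 < INR (S k)) by (apply lt_0_INR; lia).
    assert (hkM : 2 * INR (S k) <= INR M)
      by (replace 2 with (INR 2) by reflexivity; rewrite <- mult_INR; apply le_INR; lia).
    pose proof (fejer_kernel_prim_tail M (INR (S k) / INR M) ltac:(lia)) as ht.
    replace (INR M * PI ^ 2 * (INR (S k) / INR M)) with (PI ^ 2 * INR (S k)) in ht
      by (field; lra).
    rewrite Rinv_mult in ht.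
    enough (hk2 : 0 < INR (S k) / INR M <= 1 / 2) by (specialize (ht hk2); unfold Rdiv in *; lra).
    split; [apply Rdiv_lt_0_compat; lra|].
    apply Rmult_le_reg_r with (INR M); [exact hM|].
    unfold Rdiv. rewrite Rmult_assoc, Rinv_l, Rmult_1_r by lra. lra. }
  eapply Rle_trans; [|apply sum_Rle, hterm].
  rewrite minus_sum, sum_cte.
  rewrite (sum_eq _ (fun k => / INR (S k) * / PI ^ 2)) by reflexivity.
  rewrite <- scal_sum.
  assert (hH := Rmult_le_compat_l (/ PI ^ 2) _ _
                  (Rlt_le _ _ (Rinv_0_lt_compat _ hP2)) (harmonic_le_1_add_ln N)).
  unfold Rdiv. lra.
Qed.

Lemma RiemannInt_abs_sub_G_q (h H : R -> R) (q : nat) : (1 <= q)%nat ->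
  (forall x, is_derive H x (h x)) -> (forall x, continuous h x) ->
  (forall x, 0 <= h x <= 2 ^ q) ->
  exists pr : Riemann_integrable (fun x => Rabs (h x - G_q q x)) 0 1,
    RiemannInt pr = 1 + H 0 + H 1 - 2 * H (/ 2 ^ q).
Proof.
  intros hq hd hc hb.
  assert (h2q : 2 <= 2 ^ q).
  { replace q with (S (q - 1)) by lia. simpl. pose proof (pow_R1_Rle 2 (q - 1)). lra. }
  set (L := / 2 ^ q).
  assert (hqL : 2 ^ q * L = 1) by (unfold L; field; lra).
  assert (hL0 : 0 < L) by (apply Rinv_0_lt_compat; lra).
  assert (hL : 0 < L < 1) by nra.
  assert (i1 : is_RInt (fun x => Rabs (h x - G_q q x)) 0 L (2 ^ q * L - 2 ^ q * 0 - (H L - H 0))).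
  { apply (is_RInt_ext (fun x => 2 ^ q - h x)).
    - rewrite Rmin_left, Rmax_right by lra. intros x hx.
      unfold G_q. destruct (Rle_dec 0 x); [|lra].
      destruct (Rlt_dec x (/ 2 ^ q)); [|unfold L in hx; lra].
      specialize (hb x). rewrite Rabs_left1 by lra. lra.
    - replace (2 ^ q * L - 2 ^ q * 0 - (H L - H 0))
        with ((2 ^ q * L - H L) - (2 ^ q * 0 - H 0)) by ring.
      apply (is_RInt_derive_R _ (fun x => 2 ^ q * x - H x)); [lra| |].
      + intros x _. apply (is_derive_minus (fun x => 2 ^ q * x) H); [|apply hd].
        auto_derive; [easy|ring].
      + intros x _. apply (continuous_minus (fun _ => 2 ^ q) h);
          [apply continuous_const|apply hc]. }
  assert (i2 : is_RInt (fun x => Rabs (h x - G_q q x)) L 1 (H 1 - H L)).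
  { apply (is_RInt_ext h).
    - rewrite Rmin_left, Rmax_right by lra. intros x hx.
      unfold G_q. destruct (Rle_dec 0 x); [|lra].
      destruct (Rlt_dec x (/ 2 ^ q)); [unfold L in hx; lra|].
      specialize (hb x). rewrite Rminus_0_r, Rabs_right by lra. reflexivity.
    - apply is_RInt_derive_R; [lra| |]; intros x _; [apply hd|apply hc]. }
  pose proof (is_RInt_Chasles _ _ _ _ _ _ i1 i2) as i.
  exists (ex_RInt_Reals_0 _ _ _ (ex_intro _ _ i)).
  rewrite <- RInt_Reals, (is_RInt_unique _ _ _ _ i).
  change plus with Rplus. lra.
Qed.

Definition F_prim (r q : nat) (x : R) : R :=
  2 ^ q / 2 ^ r
  * sum_f_R0 (fun k => fejer_kernel_prim (2 ^ r) (x - INR k / INR (2 ^ r))) (2 ^ (r - q)).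

Lemma F_rq_fejer_kernel r q x : F_rq r q x =
  2 ^ q / 2 ^ r
  * sum_f_R0 (fun k => fejer_kernel (2 ^ r) (x - INR k / INR (2 ^ r))) (2 ^ (r - q)).
Proof.
  unfold F_rq. f_equal. apply sum_eq. intros k _.
  rewrite f_r_fejer_kernel, INR_pow2. reflexivity.
Qed.

Lemma F_rq_bounds r q x : (1 <= q)%nat -> (q <= r)%nat -> 0 <= F_rq r q x <= 2 ^ q.
Proof.
  intros hq hqr. rewrite F_rq_fejer_kernel.
  pose proof (pow_lt 2 r ltac:(lra)). pose proof (pow_lt 2 q ltac:(lra)).
  assert (hc : 0 < 2 ^ q / 2 ^ r) by (apply Rdiv_lt_0_compat; lra).
  split.
  - apply Rmult_le_pos; [lra|]. apply cond_pos_sum.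
    intro k. apply fejer_kernel_nonneg, pow2_nat_pos.
  - replace (2 ^ q) with (2 ^ q / 2 ^ r * INR (2 ^ r)) at 2 by (rewrite INR_pow2; field; lra).
    apply Rmult_le_compat_l; [lra|].
    apply sum_fejer_kernel_equispaced_le, Nat.pow_lt_mono_r; lia.
Qed.

Lemma is_derive_F_prim r q x : is_derive (F_prim r q) x (F_rq r q x).
Proof.
  rewrite F_rq_fejer_kernel. unfold F_prim.
  apply (is_derive_scal (fun x => sum_f_R0 _ _)).
  apply (is_derive_sum_f_R0 (fun k y => fejer_kernel_prim (2 ^ r) (y - INR k / INR (2 ^ r)))
                            (fun k y => fejer_kernel (2 ^ r) (y - INR k / INR (2 ^ r)))).
  intro k. apply is_derive_fejer_kernel_prim_shift.
Qed.

Lemma continuous_F_rq r q x : continuous (F_rq r q) x.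
Proof.
  apply (continuous_ext (fun x => 2 ^ q / 2 ^ r
    * sum_f_R0 (fun k => fejer_kernel (2 ^ r) (x - INR k / INR (2 ^ r))) (2 ^ (r - q)))).
  { intro y. symmetry. apply F_rq_fejer_kernel. }
  apply (continuous_scal_r (2 ^ q / 2 ^ r) (fun x => sum_f_R0 _ _)).
  apply (continuous_sum_f_R0 (fun k y => fejer_kernel (2 ^ r) (y - INR k / INR (2 ^ r)))).
  intro k. apply (continuous_comp (fun y => y - INR k / INR (2 ^ r)) (fejer_kernel (2 ^ r))).
  - apply (ex_derive_continuous (fun y => y - INR k / INR (2 ^ r))). auto_derive. easy.
  - apply continuous_fejer_kernel.
Qed.

Lemma F_prim_0 r q : F_prim r q 0 = - (2 ^ q / 2 ^ r) * fejer_prim_node_sum (2 ^ r) (2 ^ (r - q)).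
Proof.
  unfold F_prim, fejer_prim_node_sum.
  rewrite (sum_eq _ (fun k => fejer_kernel_prim (2 ^ r) (INR k / INR (2 ^ r)) * -1)).
  - rewrite <- scal_sum. ring.
  - intros k _. replace (0 - INR k / INR (2 ^ r)) with (- (INR k / INR (2 ^ r))) by ring.
    rewrite fejer_kernel_prim_opp. ring.
Qed.

Lemma F_prim_1 r q : F_prim r q 1 =
  2 ^ q / 2 ^ r * (INR (2 ^ (r - q)) + 1 - fejer_prim_node_sum (2 ^ r) (2 ^ (r - q))).
Proof.
  unfold F_prim, fejer_prim_node_sum.
  rewrite (sum_eq _ (fun k => 1 - fejer_kernel_prim (2 ^ r) (INR k / INR (2 ^ r)))).
  - rewrite minus_sum, sum_cte, S_INR. ring.
  - intros k _. apply fejer_kernel_prim_1_sub, pow2_nat_pos.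
Qed.

Lemma F_prim_inv_pow2 r q : (q <= r)%nat ->
  F_prim r q (/ 2 ^ q) = 2 ^ q / 2 ^ r * fejer_prim_node_sum (2 ^ r) (2 ^ (r - q)).
Proof.
  intro hqr. unfold F_prim, fejer_prim_node_sum. f_equal.
  rewrite <- sum_f_R0_rev. apply sum_eq. intros k hk. f_equal.
  rewrite minus_INR, !INR_pow2 by exact hk.
  rewrite (pow2_sub_split q r hqr). field. split; apply pow_nonzero; lra.
Qed.

Theorem mainTheorem4 (q r : nat) (hq : (1 <= q)%nat) (hqr : (q <= r)%nat) :
  exists pr : Riemann_integrable (fun phi => Rabs (F_rq r q phi - G_q q phi)) 0 1,
    RiemannInt pr <=
      2 ^ (q + 2) / 2 ^ r * (1 + ln (2 ^ (r - q)) / PI ^ 2).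
Proof.
  destruct (RiemannInt_abs_sub_G_q (F_rq r q) (F_prim r q) q hq (is_derive_F_prim r q)
              (continuous_F_rq r q) (fun x => F_rq_bounds r q x hq hqr)) as [pr hpr].
  exists pr. rewrite hpr, F_prim_0, F_prim_1, F_prim_inv_pow2 by exact hqr.
  assert (hS := fejer_prim_node_sum_ge (2 ^ r) (2 ^ (r - q))).
  specialize (hS (pow2_nat_pos (r - q))).
  specialize (hS ltac:(rewrite <- Nat.pow_succ_r'; apply Nat.pow_le_mono_r; lia)).
  set (S := fejer_prim_node_sum (2 ^ r) (2 ^ (r - q))) in *.
  rewrite INR_pow2 in *.
  assert (hc : 0 < 2 ^ q / 2 ^ r) by (apply Rdiv_lt_0_compat; apply pow_lt; lra).
  assert (hcN : 2 ^ q / 2 ^ r * 2 ^ (r - q) = 1).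
  { rewrite (pow2_sub_split q r hqr). field. split; apply pow_nonzero; lra. }
  replace (2 ^ (q + 2) / 2 ^ r) with (4 * (2 ^ q / 2 ^ r))
    by (rewrite pow_add; simpl; field; apply pow_nonzero; lra).
  set (c := 2 ^ q / 2 ^ r) in *.
  assert (hcS := Rmult_le_compat_l c _ _ (Rlt_le _ _ hc) hS).
  assert (hcP := Rmult_le_compat_l c _ _ (Rlt_le _ _ hc) (Rlt_le _ _ inv_PI2_lt)).
  unfold Rdiv in *. nra.
Qed.
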